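(* Let $\Lambda=KQ/\langle I\rangle$ be a $1$-Gorenstein gentle algebra over an algebraically closed field $K$, with Cohen–Macaulay Auslander algebra $\Gamma=KQ^{Aus}/\langle I^{Aus}\rangle$ and functor $\Phi:\mathrm{mod}\,\Lambda\to\mathrm{mod}\,\Gamma$, $M\mapsto\widehat{M}$, as described in the context. Let $M$ be a Gorenstein projective $\Lambda$-module, $e$ a dimension vector for $Q$, and $U,N$ $\Lambda$-modules. Suppose that the stratum $\mathcal{S}_{[U]}$ of $\mathrm{Gr}_e(M)$ has non-empty intersection with the closure $\overline{\mathcal{S}_{[N]}}$. Then $\underline{\dim}\,\widehat{U}\leq\underline{\dim}\,\widehat{N}$ componentwise, as dimension vectors of representations of $\Gamma$.
   Context: Conventions: arrows $\alpha:s(\alpha)\to t(\alpha)$; paths composed right to left ($\beta\alpha$ means $\alpha$ then $\beta$). A gentle algebra is a finite dimensional $\Lambda=KQ/\langle I\rangle$ where $I$ is a set of length-$2$ paths such that: each vertex is the start of at most two and the end of at most two arrows; for each arrow $\alpha$ there is at most one arrow $\beta$ with $t(\beta)=s(\alpha)$, $\alpha\beta\notin I$, at most one $\gamma$ with $s(\gamma)=t(\alpha)$, $\gamma\alpha\notin I$, at most one $\beta$ with $t(\beta)=s(\alpha)$, $\alpha\beta\in I$, and at most one $\gamma$ with $s(\gamma)=t(\alpha)$, $\gamma\alpha\in I$. $\Lambda$ is $1$-Gorenstein if its injective dimension as a left and as a right module is at most $1$. Modules are finite dimensional left modules (representations of $(Q,I)$). A $\Lambda$-module $G$ is Gorenstein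 projective if there is an exact complex $\cdots\to P^{-1}\to P^0\xrightarrow{d^0}P^1\to\cdots$ of projective $\Lambda$-modules which remains exact under $\mathrm{Hom}_\Lambda(-,\Lambda)$ and with $G\cong\mathrm{Ker}\,d^0$. $\mathcal{C}(\Lambda)$ is the set of repetition-free cyclic paths $\alpha_1\cdots\alpha_n$ (up to cyclic permutation) with $\alpha_i\alpha_{i+1}\in I$ for all $i$ (indices mod $n$); $Q_1^{cyc}$ is the set of arrows on such cycles, $Q_1^{ncyc}=Q_1\setminus Q_1^{cyc}$. $Q^{Aus}$ has vertices $Q_0\sqcup Q_1^{cyc}$ and arrows $Q_1^{ncyc}\sqcup\{\alpha^+:s(\alpha)\to\alpha\}_{\alpha\in Q_1^{cyc}}\sqcup\{\alpha^-:\alpha\to t(\alpha)\}_{\alpha\in Q_1^{cyc}}$; $I^{Aus}=\{\beta^+\alpha^-\mid\beta\alpha\in I,\ \alpha,\beta\in Q_1^{cyc}\}\cup\{\beta\alpha\mid\beta\alpha\in I,\ \alpha,\beta\in Q_1^{ncyc}\}$; $\Gamma=KQ^{Aus}/\langle I^{Aus}\rangle$. $\Phi(M)=\widehat{M}$ has $\widehat{M}_i=M_i$ ($i\in Q_0$), $\widehat{M}_\alpha=\mathrm{Im}\,M_\alpha$ ($\alpha\in Q_1^{cyc}$), $\widehat{M}_\beta=M_\beta$ ($\beta\in Q_1^{ncyc}$), and $\widehat{M}_{\alpha^+}$, $\widehat{M}_{\alpha^-}$ the surjection $M_{s(\alpha)}\to\mathrm{Im}\,M_\alpha$ and inclusion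 $\mathrm{Im}\,M_\alpha\to M_{t(\alpha)}$ factoring $M_\alpha$. $\mathrm{Gr}_e(M)$ is the quiver Grassmannian (projective variety) of submodules of $M$ of dimension vector $e$; for a $\Lambda$-module $N$, $\mathcal{S}_{[N]}\subseteq\mathrm{Gr}_e(M)$ is the (locally closed, irreducible) subset of submodules isomorphic to $N$. *)

From HB Require Import structures.
From mathcomp Require Import all_boot all_algebra.
Set Implicit Arguments. Unset Strict Implicit. Unset Printing Implicit Defensive.
Import GRing.Theory.
Local Open Scope ring_scope.

(* rels Q b a  means: the path  b a  (first a, then b) belongs to I.          *)
Record bquiver := BQuiver {
  vert : finType;
  arr  : finType;
  src  : arr -> vert;
  tgt  : arr -> vert;
  rels : rel arr }.
Arguments src : clear implicits.
Arguments tgt : clear implicits.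
Arguments rels : clear implicits.

(* opposite bound quiver: right Lambda-modules = left modules over it *)
Definition opQ (Q : bquiver) : bquiver :=
  @BQuiver (vert Q) (arr Q) (tgt Q) (src Q) (fun x y => rels Q y x).

Definition rels_paths (Q : bquiver) : Prop :=
  forall a b : arr Q, rels Q b a -> tgt Q a = src Q b.

Definition gentle (Q : bquiver) : Prop :=
  rels_paths Q /\
  (forall i : vert Q, #|[set a : arr Q | src Q a == i]| <= 2)%N /\
  (forall i : vert Q, #|[set a : arr Q | tgt Q a == i]| <= 2)%N /\
  (forall a : arr Q,
    [/\ (#|[set b : arr Q | (tgt Q b == src Q a) && ~~ rels Q a b]| <= 1)%N,
        (#|[set c : arr Q | (src Q c == tgt Q a) && ~~ rels Q c a]| <= 1)%N,
        (#|[set b : arr Q | (tgt Q b == src Q a) && rels Q a b]| <= 1)%N &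
        (#|[set c : arr Q | (src Q c == tgt Q a) && rels Q c a]| <= 1)%N]).

(* paths as sequences of arrows in traversal order; nonzero in KQ/<I> iff
   no consecutive pair lies in I.  KQ/<I> is finite dimensional iff the
   lengths of nonzero paths are bounded. *)
Definition is_path (Q : bquiver) (p : seq (arr Q)) : Prop :=
  forall k, (k.+1 < size p)%N -> forall x0, tgt Q (nth x0 p k) = src Q (nth x0 p k.+1).
Definition nonzero_path (Q : bquiver) (p : seq (arr Q)) : Prop :=
  is_path p /\ forall k, (k.+1 < size p)%N -> forall x0,
     ~~ rels Q (nth x0 p k.+1) (nth x0 p k).
Definition fin_dim (Q : bquiver) : Prop :=
  exists n : nat, forall p : seq (arr Q), nonzero_path p -> (size p < n)%N.

(* a vector of M_i is a row vector; arrow a acts by  v |-> v *m rmap M a *)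
Record rep (K : fieldType) (Q : bquiver) := Rep {
  rdim : vert Q -> nat;
  rmap : forall a : arr Q, 'M[K]_(rdim (src Q a), rdim (tgt Q a)) }.

Section Reps.
Variables (K : fieldType) (Q : bquiver).

(* the matrix of arrow b, seen as starting at vertex i (meaningful when i = src b) *)
Definition rmap_from (M : rep K Q) (i : vert Q) (b : arr Q)
  : 'M[K]_(rdim M i, rdim M (tgt Q b)) :=
  match i =P src Q b with
  | ReflectT e => castmx (congr1 (rdim M) (esym e), erefl) (rmap M b)
  | ReflectF _ => 0
  end.

Definition is_module (M : rep K Q) : Prop :=
  forall a b : arr Q, rels Q b a -> rmap M a *m rmap_from M (tgt Q a) b = 0.

Definition homs (M N : rep K Q) := forall i : vert Q, 'M[K]_(rdim M i, rdim N i).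

Definition is_hom (M N : rep K Q) (f : homs M N) : Prop :=
  forall a : arr Q, rmap M a *m f (tgt Q a) = f (src Q a) *m rmap N a.

Definition projective (P : rep K Q) : Prop :=
  forall (X Y : rep K Q) (p : homs X Y) (f : homs P Y),
    is_module X -> is_module Y -> is_hom p -> (forall i, row_full (p i)) ->
    is_hom f ->
    exists g : homs P X, is_hom g /\ forall i, g i *m p i = f i.

Definition injective (E : rep K Q) : Prop :=
  forall (X Y : rep K Q) (j : homs X Y) (f : homs X E),
    is_module X -> is_module Y -> is_hom j -> (forall i, row_free (j i)) ->
    is_hom f ->
    exists g : homs Y E, is_hom g /\ forall i, j i *m g i = f i.

Definition injdim_le1 (P : rep K Q) : Prop :=
  exists (E0 E1 : rep K Q) (j : homs P E0) (q : homs E0 E1),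
    [/\ is_module E0 /\ is_module E1, injective E0 /\ injective E1,
        is_hom j, is_hom q &
        forall i, [/\ row_free (j i), row_full (q i) & (j i == kermx (q i))%MS]].

(* Lambda has injective dimension <= 1 as a left module; since the projective
   modules are exactly add(Lambda), this says every projective has id <= 1 *)
Definition left_id_le1 : Prop :=
  forall P : rep K Q, is_module P -> projective P -> injdim_le1 P.

(* Gorenstein projective module: kernel of d^0 in a totally acyclic complex
   of projectives; Hom(-,Lambda)-exactness is expressed as Hom(-,E)-exactness
   for every projective E (equivalent, as proj = add Lambda). *)
Definition gorenstein_projective (G : rep K Q) : Prop :=
  exists (P : int -> rep K Q)
         (d : forall n : int, homs (P n) (P (n + 1))),
    [/\ forall n, is_module (P n) /\ projective (P n),
        forall n, is_hom (d n),
        forall n i, (d n i == kermx (d (n + 1)%R i))%MS,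
        (forall (E : rep K Q), is_module E -> projective E ->
          forall n (h : homs (P (n + 1)) E), is_hom h ->
            (forall i, d n i *m h i = 0) ->
            exists h' : homs (P (n + 1 + 1)) E, is_hom h' /\
              forall i, h i = d (n + 1) i *m h' i) &
        (exists iota : homs G (P 0), is_hom iota /\
          forall i, row_free (iota i) /\ (iota i == kermx (d 0%R i))%MS)].

(* A point of Gr_e(M) is given by basis matrices B i (rows = basis of U_i). *)
Definition bases (M : rep K Q) (e : vert Q -> nat) :=
  forall i : vert Q, 'M[K]_(e i, rdim M i).

Definition in_Gr (M : rep K Q) e (B : bases M e) : Prop :=
  (forall i, row_free (B i)) /\
  forall a : arr Q, (B (src Q a) *m rmap M a <= B (tgt Q a))%MS.

(* the point B lies in the stratum S_[N]: the submodule it spans is iso to N,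
   i.e. there is an injective morphism N -> M with image the submodule *)
Definition stratum (M : rep K Q) e (N : rep K Q) (B : bases M e) : Prop :=
  in_Gr B /\
  exists phi : homs N M, is_hom phi /\
     forall i, row_free (phi i) /\ (phi i == B i)%MS.

Definition coordT (M : rep K Q) e := {i : vert Q & ('I_(e i) * 'I_(rdim M i))%type}.
Definition coords (M : rep K Q) e (B : bases M e) : coordT M e -> K :=
  fun x => B (tag x) (tagged x).1 (tagged x).2.

(* a polynomial = list of (coefficient, exponent vector) *)
Definition polyf (X : finType) := seq (K * {ffun X -> nat}).
Definition peval (X : finType) (p : polyf X) (v : X -> K) : K :=
  \sum_(m <- p) m.1 * \prod_(x : X) v x ^+ m.2 x.

(* Zariski closure in Gr_e(M) (read through basis matrices) *)
Definition in_closure (M : rep K Q) e (S : bases M e -> Prop) (B : bases M e) : Prop :=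
  in_Gr B /\
  forall p : polyf (coordT M e),
    (forall B', S B' -> peval p (coords B') = 0) -> peval p (coords B) = 0.

End Reps.

Definition one_gorenstein (K : fieldType) (Q : bquiver) : Prop :=
  left_id_le1 K Q /\ left_id_le1 K (opQ Q).

Definition cyclic_arrow (Q : bquiver) (a : arr Q) : Prop :=
  exists c : seq (arr Q),
    [/\ uniq c, a \in c &
        forall k, (k < size c)%N ->
          rels Q (nth a c k) (nth a c (k.+1 %% size c))].

Definition aus_vertex (Q : bquiver) :=
  (vert Q + {a : arr Q | cyclic_arrow a})%type.

(* dimension vector of Phi(M) = \hat M over Q^Aus *)
Definition dim_hat (K : fieldType) (Q : bquiver) (M : rep K Q) (v : aus_vertex Q) : nat :=
  match v with
  | inl i => rdim M i
  | inr a => \rank (rmap M (sval a))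
  end.

From mathcomp Require Import all_boot all_algebra.
From Stdlib Require Import Classical.
Set Implicit Arguments. Unset Strict Implicit. Unset Printing Implicit Defensive.
Import GRing.Theory.
Local Open Scope ring_scope.

(* On every point of a stratum the submodule has dimension e i at the vertex i of
   Q, and at a cyclic arrow a the dimension of \hat U_a is the rank of the matrix
   B_{s(a)} M_a read off from the basis matrices B of the point.  The rank of a
   matrix depending polynomially on B is lower semicontinuous: rank >= r means
   that some r x r minor, a polynomial in the coordinates of B, does not vanish.
   So the ranks can only drop when passing to the closure of the stratum of N. *)

Section PolynomialFunctions.
Variables (K : fieldType) (Q : bquiver) (M : rep K Q) (e : vert Q -> nat).

Definition polynomial_fun (f : bases M e -> K) :=
  exists p : polyf K (coordT M e), forall B, peval p (coords B) = f B.

Lemma polynomial_fun_ext f g :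
  (forall B, f B = g B) -> polynomial_fun g -> polynomial_fun f.
Proof. by move=> fg [p Hp]; exists p => B; rewrite Hp fg. Qed.

Lemma polynomial_fun_cst c : polynomial_fun (fun _ => c).
Proof.
exists [:: (c, [ffun=> 0%N])] => B; rewrite /peval big_seq1 /=.
by rewrite big1 ?mulr1 // => x _; rewrite ffunE expr0.
Qed.

Lemma polynomial_fun_coord x : polynomial_fun (fun B => coords B x).
Proof.
exists [:: (1, [ffun y => nat_of_bool (y == x)])] => B.
rewrite /peval big_seq1 /= mul1r (bigD1 x) //= ffunE eqxx expr1.
by rewrite big1 ?mulr1 // => y /negbTE yx; rewrite ffunE yx expr0.
Qed.

Lemma polynomial_funD f g :
  polynomial_fun f -> polynomial_fun g -> polynomial_fun (fun B => f B + g B).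
Proof.
by move=> [p Hp] [q Hq]; exists (p ++ q) => B; rewrite /peval big_cat -Hp -Hq.
Qed.

Lemma polynomial_funM f g :
  polynomial_fun f -> polynomial_fun g -> polynomial_fun (fun B => f B * g B).
Proof.
move=> [p Hp] [q Hq].
pose T := (K * {ffun coordT M e -> nat})%type.
exists [seq ((a : T).1 * (b : T).1, [ffun x => ((a : T).2 x + (b : T).2 x)%N])
       | a <- (p : seq T), b <- (q : seq T)] => B.
rewrite -Hp -Hq /peval big_allpairs_dep mulr_suml; apply: eq_bigr => a _.
rewrite mulr_sumr; apply: eq_bigr => b _ /=.
rewrite (eq_bigr (fun x => coords B x ^+ a.2 x * coords B x ^+ b.2 x)).
  by rewrite big_split /= mulrACA.
by move=> x _; rewrite ffunE exprD.
Qed.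

Lemma polynomial_fun_sum (I : Type) (s : seq I) (F : I -> bases M e -> K) :
  (forall i, polynomial_fun (F i)) ->
  polynomial_fun (fun B => \sum_(i <- s) F i B).
Proof.
move=> PF; elim: s => [|i s IHs].
  by apply: polynomial_fun_ext (polynomial_fun_cst 0) => B; rewrite big_nil.
by apply: polynomial_fun_ext (polynomial_funD (PF i) IHs) => B; rewrite big_cons.
Qed.

Lemma polynomial_fun_prod (I : Type) (s : seq I) (F : I -> bases M e -> K) :
  (forall i, polynomial_fun (F i)) ->
  polynomial_fun (fun B => \prod_(i <- s) F i B).
Proof.
move=> PF; elim: s => [|i s IHs].
  by apply: polynomial_fun_ext (polynomial_fun_cst 1) => B; rewrite big_nil.
by apply: polynomial_fun_ext (polynomial_funM (PF i) IHs) => B; rewrite big_cons.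
Qed.

Lemma polynomial_fun_mulmx_entry (i : vert Q) p (A : 'M[K]_(rdim M i, p)) k l :
  polynomial_fun (fun B => (B i *m A) k l).
Proof.
have entry : polynomial_fun (fun B => \sum_(j <- index_enum 'I_(rdim M i))
    coords B (existT (fun i0 => ('I_(e i0) * 'I_(rdim M i0))%type) i (k, j)) * A j l).
  by apply: polynomial_fun_sum => j; apply: polynomial_funM;
    [exact: polynomial_fun_coord | exact: polynomial_fun_cst].
by apply: polynomial_fun_ext entry => B; rewrite mxE.
Qed.

Lemma polynomial_fun_det n (F : 'I_n -> 'I_n -> bases M e -> K) :
  (forall k l, polynomial_fun (F k l)) ->
  polynomial_fun (fun B => \det (\matrix_(k, l) F k l B)).
Proof.
move=> PF; rewrite /determinant.
apply: polynomial_fun_sum => s; apply: polynomial_funM.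
  exact: polynomial_fun_cst.
apply: polynomial_fun_prod => k.
by apply: polynomial_fun_ext (PF k (perm.fun_of_perm s k)) => B; rewrite mxE.
Qed.

Lemma in_closure_nonempty (S : bases M e -> Prop) B :
  in_closure S B -> exists B', S B'.
Proof.
move=> [_ cl]; apply/not_all_not_ex => S0.
have [p p1] := polynomial_fun_cst 1.
by move/eqP: (cl p (fun B' SB' => False_ind _ (S0 B' SB'))); rewrite p1 oner_eq0.
Qed.

Lemma in_closure_polynomial_fun (S : bases M e -> Prop) f B :
  polynomial_fun f -> (forall B', S B' -> f B' = 0) -> in_closure S B -> f B = 0.
Proof.
by move=> [p Hp] fS [_ cl]; rewrite -Hp cl // => B' /fS; rewrite Hp.
Qed.

End PolynomialFunctions.

Lemma rank_minor_le (K : fieldType) m p n (X : 'M[K]_(m, p))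
  (f : 'I_n -> 'I_m) (g : 'I_n -> 'I_p) :
  (\rank (\matrix_(k, l) X (f k) (g l)) <= \rank X)%N.
Proof.
have -> : \matrix_(k, l) X (f k) (g l) = (rowsub g (rowsub f X)^T)^T.
  by apply/matrixP => k l; rewrite !mxE.
rewrite mxrank_tr (leq_trans (mxrankS (rowsub_sub _ _))) // mxrank_tr.
exact: mxrankS (rowsub_sub _ _).
Qed.

Lemma exists_maximal_minor_neq0 (K : fieldType) m p (X : 'M[K]_(m, p)) :
  exists (f : 'I_(\rank X) -> 'I_m) (g : 'I_(\rank X) -> 'I_p),
    \det (\matrix_(k, l) X (f k) (g l)) != 0.
Proof.
set R := rowsub (maxrankfun X) X.
have R_full : row_full R^T.
  by rewrite /row_full mxrank_tr; have := maxrowsub_free X; rewrite /row_free.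
exists (maxrankfun X), (fullrankfun R_full).
have -> : \matrix_(k, l) X (maxrankfun X k) (fullrankfun R_full l) =
          (rowsub (fullrankfun R_full) R^T)^T.
  by apply/matrixP => k l; rewrite !mxE.
by rewrite det_tr -unitfE -unitmxE fullrowsub_unit.
Qed.

Lemma det_minor_eq0 (K : fieldType) m p n (X : 'M[K]_(m, p))
  (f : 'I_n -> 'I_m) (g : 'I_n -> 'I_p) :
  (\rank X < n)%N -> \det (\matrix_(k, l) X (f k) (g l)) = 0.
Proof.
move=> small; apply/eqP; rewrite -[_ == 0]negbK -unitfE -unitmxE -row_free_unit.
rewrite /row_free; apply/negP => /eqP full.
by have := rank_minor_le X f g; rewrite full leqNgt small.
Qed.

Lemma rank_mulmx_in_closure_le (K : fieldType) (Q : bquiver) (M : rep K Q) e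
  (S : bases M e -> Prop) (B : bases M e) i p (A : 'M[K]_(rdim M i, p)) r :
  (forall B', S B' -> \rank (B' i *m A) <= r)%N -> in_closure S B ->
  (\rank (B i *m A) <= r)%N.
Proof.
move=> rS clB; rewrite leqNgt; apply/negP => big.
have [f [g minor_neq0]] := exists_maximal_minor_neq0 (B i *m A).
move/eqP: minor_neq0; apply.
apply: (in_closure_polynomial_fun
  (f := fun B' => \det (\matrix_(k, l) (B' i *m A) (f k) (g l)))) clB.
  by apply: polynomial_fun_det => k l; apply: polynomial_fun_mulmx_entry.
by move=> B' /rS rB'; apply: det_minor_eq0; apply: leq_ltn_trans big.
Qed.

Section Strata.
Variables (K : fieldType) (Q : bquiver) (M : rep K Q) (e : vert Q -> nat).
Variables (U : rep K Q) (B : bases M e).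
Hypothesis BU : stratum U B.

Lemma stratum_rdim i : rdim U i = e i.
Proof.
have [[B_free _] [phi [_ /(_ i) [phi_free phiB]]]] := BU.
by rewrite -(eqP phi_free) (eqmx_rank phiB) (eqP (B_free i)).
Qed.

Lemma stratum_rank_mulmx a : \rank (B (src Q a) *m rmap M a) = \rank (rmap U a).
Proof.
have [_ [phi [phi_hom phiB]]] := BU.
have [_ phiBs] := phiB (src Q a); have [phi_free _] := phiB (tgt Q a).
rewrite -(mxrankMfree (rmap U a) phi_free) phi_hom.
by apply/eqmx_rank/eqmxP/eqmxMr/eqmx_sym/eqmxP.
Qed.

End Strata.

Theorem proposition4p3 (K : closedFieldType) (Q : bquiver) :
  gentle Q -> fin_dim Q -> one_gorenstein K Q ->
  forall M : rep K Q, is_module M -> gorenstein_projective M ->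
  forall (e : vert Q -> nat) (U N : rep K Q),
    is_module U -> is_module N ->
    (exists B : bases M e, stratum U B /\ in_closure (stratum N) B) ->
    forall v : aus_vertex Q, (dim_hat U v <= dim_hat N v)%N.
Proof.
move=> _ _ _ M _ _ e U N _ _ [B [BU clB]] [i | [a _]] /=.
  have [B' B'N] := in_closure_nonempty clB.
  by rewrite (stratum_rdim BU) (stratum_rdim B'N).
rewrite -(stratum_rank_mulmx BU); apply: rank_mulmx_in_closure_le clB.
by move=> B' B'N; rewrite (stratum_rank_mulmx B'N).
Qed.
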